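(* For every prime $n\ge 5$, the regular origami $\big(A_n,(1,2,3),(1,2,3,\dots,n)\big)$, where $A_n$ is the alternating group on $\{1,\dots,n\}$, $x=(1,2,3)$ and $y=(1,2,\dots,n)$, has a totally non-congruence group as Veech group.
   Context: A regular origami $(G,x,y)$ is given by a finite group $G$ generated by two elements $x,y$: it is the translation surface obtained from unit squares indexed by the elements $g\in G$, where the right edge of square $g$ is glued to the left edge of square $gx$ and the top edge of square $g$ is glued to the bottom edge of square $gy$. Two regular origamis $(G,x,y)$, $(G',x',y')$ are identified if there is a group isomorphism $G\to G'$ with $x\mapsto x'$, $y\mapsto y'$. The group $\mathrm{SL}(2,\mathbb{Z})$ acts on regular origamis via $S\cdot(G,x,y)=(G,y^{-1},x)$ and $T\cdot(G,x,y)=(G,x,yx^{-1})$, where $S=\begin{pmatrix}0&-1\\1&0\end{pmatrix}$, $T=\begin{pmatrix}1&1\\0&1\end{pmatrix}$. The Veech group of a regular origami is its stabilizer under this action, a finite index subgroup of $\mathrm{SL}(2,\mathbb{Z})$. A finite index subgroup $\Gamma\le\mathrm{SL}(2,\mathbb{Z})$ is a totally non-congruence group if for every integer $n\ge1$ the reduction map $\mathrm{SL}(2,\mathbb{Z})\to\mathrm{SL}(2,\mathbb{Z}/n\mathbb{Z})$ restricted to $\Gamma$ is surjective. *)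

From HB Require Import structures.
From mathcomp Require Import all_boot all_order all_algebra all_fingroup all_solvable.
Set Implicit Arguments. Unset Strict Implicit. Unset Printing Implicit Defensive.
Import GRing.Theory Num.Theory.

Definition regular_origami (gT : finGroupType) (G : {group gT}) (x y : gT) : Prop :=
  G :=: <<[set x; y]>>%g.

Definition origami_iso (gT : finGroupType) (G : {group gT}) (p q : gT * gT) : Prop :=
  exists f : {morphism G >-> gT}, [/\ isom G G f, f p.1 = q.1 & f p.2 = q.2].

Inductive sl2gen := genS | genSinv | genT | genTinv.

Local Open Scope group_scope.
Definition act_gen (gT : finGroupType) (g : sl2gen) (p : gT * gT) : gT * gT :=
  match g with
  | genS => (p.2^-1, p.1)
  | genSinv => (p.2, p.1^-1)
  | genT => (p.1, p.2 * p.1^-1)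
  | genTinv => (p.1, p.2 * p.1)
  end.
Local Close Scope group_scope.

Definition act_word (gT : finGroupType) (w : seq sl2gen) (p : gT * gT) : gT * gT :=
  foldr (@act_gen gT) p w.

Local Open Scope ring_scope.

Definition mx2 (a b c d : int) : 'M[int]_2 :=
  \matrix_(i < 2, j < 2)
    if (i == 0 :> nat) then (if (j == 0 :> nat) then a else b)
    else (if (j == 0 :> nat) then c else d).

Definition gen_mx (g : sl2gen) : 'M[int]_2 :=
  match g with
  | genS => mx2 0 (-1) 1 0
  | genSinv => mx2 0 1 (-1) 0
  | genT => mx2 1 1 0 1
  | genTinv => mx2 1 (-1) 0 1
  end.

Definition word_mx (w : seq sl2gen) : 'M[int]_2 :=
  foldr (fun g M => gen_mx g *m M) 1%:M w.

Definition veech_group (gT : finGroupType) (G : {group gT}) (x y : gT)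
  : 'M[int]_2 -> Prop :=
  fun A => exists w : seq sl2gen,
      word_mx w = A /\ origami_iso G (x, y) (act_word w (x, y)).

Definition red_mx (n : nat) (A : 'M[int]_2) : 'M['Z_n]_2 :=
  map_mx (fun z : int => z%:~R) A.

(* Totally non-congruence: for every n >= 1 the reduction SL(2,Z) -> SL(2,Z/nZ)
   restricted to Gamma is surjective.  For n = 1, SL(2,Z/1Z) is trivial, so this
   means Gamma is nonempty; for n >= 2 we use 'Z_n (= Z/nZ). *)
Definition totally_non_congruence (Gamma : 'M[int]_2 -> Prop) : Prop :=
  (exists A, Gamma A) /\
  forall n : nat, (1 < n)%N ->
    forall B : 'M['Z_n]_2, \det B = 1 -> exists A, Gamma A /\ red_mx n A = B.

Local Close Scope ring_scope.

Definition cyc3 (n k : nat) : nat :=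
  if (3 <= n)%N then
    (if k == 0%N then 1%N else if k == 1%N then 2%N else if k == 2%N then 0%N else k)
  else k.

Lemma cyc3_lt n (i : 'I_n) : (cyc3 n i < n)%N.
Proof.
rewrite /cyc3; case: ifP => // h3.
case: eqP => [_|_]; first exact: leq_trans h3.
case: eqP => [_|_]; first exact: leq_trans h3.
by case: eqP => [_|_]; [exact: leq_trans h3|].
Qed.

Definition cyc3_fun n (i : 'I_n) : 'I_n := Ordinal (cyc3_lt i).

Lemma cyc3_fun_inj n : injective (@cyc3_fun n).
Proof.
move=> i j /(congr1 val) /=; rewrite /cyc3; case: ifP => _ h; last exact: val_inj.
apply: val_inj; move: h.
case: i => [[|[|[|i]]] Hi]; case: j => [[|[|[|j]]] Hj] //=.
Qed.

(* x = (1,2,3): 0 -> 1 -> 2 -> 0 (labels shifted by one) *)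
Definition cycle3 (n : nat) : {perm 'I_n} := perm (@cyc3_fun_inj n).
Definition cyclen (n : nat) : {perm 'I_n} := perm (@ordS_inj n).

From Pilot Require Import Defs.
From mathcomp Require Import all_boot all_order all_algebra all_fingroup all_solvable.
From mathcomp Require Import zify ring.

Set Implicit Arguments.
Unset Strict Implicit.
Unset Printing Implicit Defensive.

Import GRing.Theory.

(* Write x = (1 2 3), y = (1 2 ... n) and t = (1 2).  Since x^t = x^2 and y^t = y x, t
   normalises H = <x, y>; as n is prime, t and the n-cycle y generate S_n, so H is a
   nontrivial normal subgroup of the simple group A_n, hence H = A_n.
   Since x^3 = y^n = (y x)^n = 1 and y x^-1 is the (n-2)-cycle (3 ... n), the Veech group
   contains T^(3k), L^(nk), T L^(nk) T^-1 and T^-1 L^((n-2)k) T for all k, where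
   L = S T^-1 S^-1 = [[1, 0], [1, 1]].  Split a modulus m into its 3-part q and the rest r:
   some T^(3k) is congruent to T modulo r and to 1 modulo q, while modulo q (prime to n)
   the other elements give L^-1, T L^-1 T^-1 and L, whose product is T.  Splitting m at n
   instead (n is prime to 3 and to n - 2) gives L in the same way.  Finally T and L
   generate SL(2, Z/mZ): Euclid's algorithm writes every integer matrix of determinant
   1 mod m, up to congruence, as a product of elementary matrices. *)

Local Open Scope group_scope.

Lemma odd_permX (T : finType) (s : {perm T}) k : odd_perm (s ^+ k) = odd k && odd_perm s.
Proof.
elim: k => [|k IHk]; first by rewrite expg0 odd_perm1.
by rewrite expgS odd_permM IHk /=; case: (odd k); case: (odd_perm s).
Qed.

Lemma Alt_of_odd_order (T : finType) (s : {perm T}) k :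
  odd k -> s ^+ k = 1 -> s \in 'Alt_T.
Proof.
by move=> odd_k sk1; rewrite Alt_even; have := odd_permX s k; rewrite sk1 odd_perm1 odd_k /= => <-.
Qed.

Lemma Alt_of_normalised (T : finType) (H : {group {perm T}}) (a b : T) (c : {perm T}) :
  prime #|T| -> (4 < #|T|)%N -> a != b -> #[c] = #|T| ->
  c \in H -> tperm a b \in 'N(H) -> H \subset 'Alt_T -> H :!=: 1 -> H :=: 'Alt_T.
Proof.
move=> T_prime T_gt4 neq_ab ord_c cH tN HA ntH.
have SN : 'Sym_T \subset 'N(H).
  rewrite -(gen_tperm_circular_shift T_prime neq_ab ord_c) gen_subG.
  by apply/subsetP => _ /set2P[]->; last exact: (subsetP (normG H)).
have HnA : H <| 'Alt_T by rewrite /normal HA (subset_trans (Alt_subset T) SN).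
have /simpleP[_ /(_ H HnA)] := simple_Alt5 T_gt4.
by case=> // H1; case/eqP: ntH.
Qed.

Lemma cycle3E n (i : 'I_n) : (cycle3 n i : nat) = cyc3 n i.
Proof. by rewrite permE. Qed.

Lemma cyclenE n (i : 'I_n) : (cyclen n i : nat) = if i == n.-1 :> nat then 0%N else i.+1.
Proof.
rewrite permE /=; have lt_i_n := ltn_ord i.
by case: eqP => [->|ne]; [rewrite prednK ?modnn // | rewrite modn_small //]; lia.
Qed.

Lemma cyclen_expgE n (i : 'I_n) k : ((cyclen n ^+ k) i : nat) = (i + k) %% n.
Proof.
rewrite permX; elim: k => [|k IHk] /=; first by rewrite addn0 modn_small.
by rewrite permE /= IHk -addn1 modnDml addn1 addnS.
Qed.

Lemma cyclen_expgn n : cyclen n ^+ n = 1.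
Proof.
by apply/permP => i; apply: val_inj; rewrite /= cyclen_expgE modnDr modn_small ?perm1.
Qed.

Lemma order_cyclen n : prime n -> #[cyclen n] = n.
Proof.
move=> n_prime; have n_gt1 := prime_gt1 n_prime.
have /(prime_nt_dvdP n_prime) -> // : #[cyclen n] %| n by rewrite order_dvdn cyclen_expgn.
rewrite order_eq1; apply/eqP => /permP/(_ (Ordinal (ltnW n_gt1)))/(congr1 val).
by rewrite /= cyclenE perm1 /=; case: eqP => //; lia.
Qed.

Lemma cycle3_expg3 n : cycle3 n ^+ 3 = 1.
Proof.
apply/permP => i; apply: val_inj; rewrite permX perm1 /= !cycle3E /cyc3.
by case: (2 < n) => //; case: i => [[|[|[|k]]] ?].
Qed.

Section Generators.

Variable n : nat.
Hypothesis n_gt2 : (2 < n)%N.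

Local Notation x := (cycle3 n).
Local Notation y := (cyclen n).
Local Notation z := (cyclen n * (cycle3 n)^-1).

Let i0 : 'I_n := Ordinal (ltnW (ltnW n_gt2)).
Let i1 : 'I_n := Ordinal (ltnW n_gt2).
Let t := tperm i0 i1.

Let tE (i : 'I_n) :
  (t i : nat) = if i == 0%N :> nat then 1%N else if i == 1%N :> nat then 0%N else i.
Proof.
case: tpermP => [->|->|ne0 ne1] //=.
case: eqP => [e0|_]; first by case: ne0; apply: val_inj.
by case: eqP => [e1|_] //; case: ne1; apply: val_inj.
Qed.

Lemma cycle3_conj_swap : x ^ t = x * x.
Proof.
apply/permP => i; apply: val_inj; rewrite conjgE !permM tpermV /= !(tE, cycle3E) /cyc3 n_gt2.
by case: i => [[|[|[|k]]] ?].
Qed.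

Lemma cyclen_conj_swap : y ^ t = y * x.
Proof.
apply/permP => i; apply: val_inj.
rewrite conjgE !permM tpermV /= !(tE, cycle3E, cyclenE) /cyc3 n_gt2.
by case: i => [[|[|k]] ?] /=; do ?case: eqP => //=; lia.
Qed.

Lemma cyclen_cycle3_expgn : (y * x) ^+ n = 1.
Proof. by rewrite -cyclen_conj_swap -conjXg cyclen_expgn conj1g. Qed.

Lemma cycle3V : x^-1 = x * x.
Proof. by apply/eqP; rewrite eq_invg_mul -(cycle3_expg3 n) !expgS expg0 mulg1. Qed.

Let cyclen_cycle3VE (i : 'I_n) :
  (z i : nat) = if (i < 2)%N then i : nat else if i == n.-1 :> nat then 2%N else i.+1.
Proof.
rewrite cycle3V !permM !(cyclenE, cycle3E) /cyc3 n_gt2.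
by case: i => [[|[|k]] ?] /=; do ?case: eqP => //=; lia.
Qed.

Let cyclen_cycle3V_expgE (i : 'I_n) k :
  (2 <= i)%N -> ((z ^+ k) i : nat) = (2 + (i - 2 + k) %% (n - 2))%N.
Proof.
move=> le2i; have lt_i_n := ltn_ord i; rewrite permX.
elim: k => [|k IHk] /=; first by rewrite addn0 modn_small; lia.
rewrite cyclen_cycle3VE IHk ltnNge leq_addr /= addnS.
rewrite -[(i - 2 + k).+1]addn1 -(modnDml (i - 2 + k) 1) addn1.
have : ((i - 2 + k) %% (n - 2) < n - 2)%N by rewrite ltn_pmod //; lia.
move: ((i - 2 + k) %% (n - 2))%N => r lt_r.
case: (ltngtP r.+1 (n - 2)) => [lt|gt|eq]; first rewrite modn_small //; last rewrite eq modnn.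
all: by case: eqP; lia.
Qed.

Lemma cyclen_cycle3V_expg : z ^+ (n - 2) = 1.
Proof.
apply/permP => i; apply: val_inj; rewrite perm1 /=.
case: (ltnP i 2) => [lt_i2|le2i].
  by rewrite permX_fix //; apply: val_inj; rewrite /= cyclen_cycle3VE lt_i2.
by rewrite cyclen_cycle3V_expgE // modnDr modn_small; have := ltn_ord i; lia.
Qed.

Lemma cycle3_neq1 : x != 1.
Proof.
by apply/eqP => /permP/(_ i0)/(congr1 val); rewrite /= cycle3E perm1 /cyc3 n_gt2.
Qed.

Lemma Alt_generated : prime n -> (4 < n)%N -> 'Alt_('I_n) :=: <<[set x; y]>>.
Proof.
move=> n_prime n_gt4; set H := <<[set x; y]>>.
have xH : x \in H by rewrite mem_gen // !inE eqxx.
have yH : y \in H by rewrite mem_gen // !inE eqxx orbT.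
have n_odd : odd n by case: (even_prime n_prime) => // n2; lia.
have HA : H \subset 'Alt_('I_n).
  rewrite gen_subG; apply/subsetP => _ /set2P[]->.
    exact: Alt_of_odd_order (cycle3_expg3 n).
  exact: Alt_of_odd_order n_odd (cyclen_expgn n).
have tN : t \in 'N(H).
  apply/normP/eqP; rewrite eqEcard cardJg leqnn andbT -genJ gen_subG.
  apply/subsetP => _ /imsetP[_ /set2P[]-> ->].
    by rewrite cycle3_conj_swap groupM.
  by rewrite cyclen_conj_swap groupM.
symmetry; apply: (Alt_of_normalised _ _ _ _ yH tN HA); rewrite ?card_ord ?order_cyclen //.
by apply/trivgPn; exists x; last exact: cycle3_neq1.
Qed.

End Generators.

Local Close Scope group_scope.
Local Open Scope ring_scope.

Definition upmx (j : int) : 'M[int]_2 := mx2 1 j 0 1.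
Definition lowmx (j : int) : 'M[int]_2 := mx2 1 0 j 1.

Lemma mx2_mul (a b c d a' b' c' d' : int) :
  mx2 a b c d *m mx2 a' b' c' d' =
  mx2 (a * a' + b * c') (a * b' + b * d') (c * a' + d * c') (c * b' + d * d').
Proof.
apply/matrixP => i j; rewrite !mxE !big_ord_recl big_ord0 !mxE /=.
by case: i => [[|[|i]] ?]; case: j => [[|[|j]] ?] //=; rewrite addr0.
Qed.

Lemma mx2_one : mx2 1 0 0 1 = 1%:M.
Proof.
by apply/matrixP => i j; rewrite !mxE; case: i => [[|[|i]] ?]; case: j => [[|[|j]] ?].
Qed.

Lemma mx2E (A : 'M[int]_2) : A = mx2 (A 0 0) (A 0 1) (A 1 0) (A 1 1).
Proof.
apply/matrixP => i j; rewrite !mxE.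
by case: i => [[|[|i]] ?]; case: j => [[|[|j]] ?] //=; congr (A _ _); apply: val_inj.
Qed.

Lemma det_mx2 (a b c d : int) : \det (mx2 a b c d) = a * d - b * c.
Proof.
rewrite (expand_det_row _ 0) !big_ord_recl big_ord0 /cofactor !det_mx11 !mxE /=.
by rewrite /bump /= expr0 expr1; ring.
Qed.

Lemma upmx0 : upmx 0 = 1%:M. Proof. exact: mx2_one. Qed.
Lemma lowmx0 : lowmx 0 = 1%:M. Proof. exact: mx2_one. Qed.

Lemma upmxD a b : upmx (a + b) = upmx a *m upmx b.
Proof. by rewrite /upmx mx2_mul; congr mx2; ring. Qed.

Lemma lowmxD a b : lowmx (a + b) = lowmx a *m lowmx b.
Proof. by rewrite /lowmx mx2_mul; congr mx2; ring. Qed.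

Lemma det_upmx j : \det (upmx j) = 1.
Proof. by rewrite det_mx2; ring. Qed.

Definition T_word k := nseq k genT.
(* Qualified: [genS] alone is the fingroup lemma about generated subgroups. *)
Definition L_word k := flatten (nseq k [:: Defs.genS; genTinv; genSinv]).

Lemma word_mx_cat w1 w2 : word_mx (w1 ++ w2) = word_mx w1 *m word_mx w2.
Proof. by elim: w1 => [|g w IHw] /=; rewrite ?mul1mx // IHw mulmxA. Qed.

Lemma act_word_cat (gT : finGroupType) w1 w2 (p : gT * gT) :
  act_word (w1 ++ w2) p = act_word w1 (act_word w2 p).
Proof. exact: foldr_cat. Qed.

Lemma word_mx_T k : word_mx (T_word k) = upmx k.
Proof.
elim: k => [|k IHk]; first by rewrite upmx0.
by rewrite [LHS]/= IHk intS upmxD.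
Qed.

Lemma word_mx_L k : word_mx (L_word k) = lowmx k.
Proof.
elim: k => [|k IHk]; first by rewrite lowmx0.
rewrite [L_word _]/= word_mx_cat IHk intS lowmxD /= mulmx1.
by congr (_ *m _); rewrite !mx2_mul /lowmx; congr mx2; ring.
Qed.

Local Open Scope group_scope.

Lemma act_word_T (gT : finGroupType) k (p : gT * gT) :
  act_word (T_word k) p = (p.1, p.2 * p.1 ^- k).
Proof.
elim: k => [|k IHk]; first by rewrite invg1 mulg1; case: p.
by rewrite [LHS]/= IHk /= expgS invMg mulgA.
Qed.

Lemma act_word_L (gT : finGroupType) k (p : gT * gT) :
  act_word (L_word k) p = (p.2 ^- k * p.1, p.2).
Proof.
elim: k => [|k IHk]; first by rewrite invg1 mul1g; case: p.
by rewrite [L_word _]/= act_word_cat IHk /= !invMg !invgK expgSr invMg !mulgA.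
Qed.

Definition stab_mx (gT : finGroupType) (p : gT * gT) (A : 'M[int]_2) : Prop :=
  exists2 w, word_mx w = A & act_word w p = p.

Section Stabilizer.

Variables (gT : finGroupType) (x y : gT).

Lemma stab_mx1 : stab_mx (x, y) 1%:M.
Proof. by exists [::]. Qed.

Lemma stab_mxM A B : stab_mx (x, y) A -> stab_mx (x, y) B -> stab_mx (x, y) (A *m B).
Proof.
move=> [w <- wp] [w' <- w'p]; exists (w ++ w'); first exact: word_mx_cat.
by rewrite act_word_cat w'p.
Qed.

Lemma veech_group_stab (G : {group gT}) A : stab_mx (x, y) A -> veech_group G x y A.
Proof. by case=> w wA wp; exists w; rewrite wp; split=> //; exists (idm G); rewrite idm_isom. Qed.

Lemma stab_mx_upmx a k : x ^+ a = 1 -> stab_mx (x, y) (upmx (a * k)%N).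
Proof.
move=> xa; exists (T_word (a * k)); first exact: word_mx_T.
by rewrite act_word_T /= expgM xa expg1n invg1 mulg1.
Qed.

Lemma stab_mx_lowmx b k : y ^+ b = 1 -> stab_mx (x, y) (lowmx (b * k)%N).
Proof.
move=> yb; exists (L_word (b * k)); first exact: word_mx_L.
by rewrite act_word_L /= expgM yb expg1n invg1 mul1g.
Qed.

Lemma stab_mx_lowmx_conjT c k :
  (y * x) ^+ c = 1 -> stab_mx (x, y) (upmx 1 *m lowmx (c * k)%N *m upmx (-1)).
Proof.
move=> yxc; exists ([:: genT] ++ L_word (c * k) ++ [:: genTinv]).
  by rewrite !word_mx_cat word_mx_L /= !mulmx1 mulmxA.
by rewrite !act_word_cat act_word_L /= expgM yxc expg1n invg1 mul1g mulgK.
Qed.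

Lemma stab_mx_lowmx_conjTV d k :
  (y * x^-1) ^+ d = 1 -> stab_mx (x, y) (upmx (-1) *m lowmx (d * k)%N *m upmx 1).
Proof.
move=> yxd; exists ([:: genTinv] ++ L_word (d * k) ++ [:: genT]).
  by rewrite !word_mx_cat word_mx_L /= !mulmx1 mulmxA.
by rewrite !act_word_cat act_word_L /= expgM yxd expg1n invg1 mul1g mulgKV.
Qed.

End Stabilizer.

Local Close Scope group_scope.

Definition congr_mx (m : nat) (A B : 'M[int]_2) := forall i j, (m%:Z %| A i j - B i j)%Z.

Section Congruence.

Variable m : nat.

Lemma congr_mx_refl A : congr_mx m A A.
Proof. by move=> i j; rewrite subrr dvdz0. Qed.

Lemma congr_mx_trans A B C : congr_mx m A B -> congr_mx m B C -> congr_mx m A C.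
Proof. by move=> AB BC i j; rewrite -(subrKA (B i j)) rpredD. Qed.

Lemma congr_mxM A A' B B' :
  congr_mx m A A' -> congr_mx m B B' -> congr_mx m (A *m B) (A' *m B').
Proof.
move=> AA' BB' i j; rewrite !mxE -sumrB; apply: rpred_sum => k _.
have -> : A i k * B k j - A' i k * B' k j =
  (A i k - A' i k) * B k j + A' i k * (B k j - B' k j) by ring.
by apply: rpredD; [apply: dvdz_mulr | apply: dvdz_mull].
Qed.

Lemma congr_mx2 a b c d a' b' c' d' :
  (m %| a - a')%Z -> (m %| b - b')%Z -> (m %| c - c')%Z -> (m %| d - d')%Z ->
  congr_mx m (mx2 a b c d) (mx2 a' b' c' d').
Proof.
by move=> ? ? ? ? i j; rewrite !mxE; case: i => [[|[|i]] ?]; case: j => [[|[|j]] ?].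
Qed.

Lemma congr_upmx a b : (m %| a - b)%Z -> congr_mx m (upmx a) (upmx b).
Proof. by move=> ab; apply: congr_mx2; rewrite // subrr dvdz0. Qed.

Lemma congr_lowmx a b : (m %| a - b)%Z -> congr_mx m (lowmx a) (lowmx b).
Proof. by move=> ab; apply: congr_mx2; rewrite // subrr dvdz0. Qed.

Lemma intr_Zp_eq0 (z : int) : (1 < m)%N -> ((z%:~R : 'Z_m) == 0) = (m %| z)%Z.
Proof.
move=> m_gt1; have -> : ((z%:~R : 'Z_m) == 0) = ((`|z|%:R : 'Z_m) == 0).
  by case: z => k; rewrite // NegzE mulrNz oppr_eq0.
by rewrite -val_eqE /= val_Zp_nat // dvdzE.
Qed.

Lemma red_mx_congr A B : (1 < m)%N -> congr_mx m A B -> red_mx m A = red_mx m B.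
Proof.
move=> m_gt1 AB; apply/matrixP => i j; rewrite !mxE; apply/eqP.
by rewrite -subr_eq0 -rmorphB intr_Zp_eq0.
Qed.

Lemma red_mx_lift (B : 'M['Z_m]_2) : (1 < m)%N -> \det B = 1 ->
  exists2 A, red_mx m A = B & (m %| \det A - 1)%Z.
Proof.
move=> m_gt1 detB; pose A := \matrix_(i, j) (B i j : nat)%:Z.
have redA : red_mx m A = B by apply/matrixP => i j; rewrite !mxE -pmulrn natr_Zp.
exists A => //; rewrite -intr_Zp_eq0 // rmorphB rmorph1 /= -det_map_mx.
by rewrite -[map_mx _ _]/(red_mx m A) redA detB subrr.
Qed.

End Congruence.

Lemma congr_mx_crt q r A B :
  coprime q r -> congr_mx q A B -> congr_mx r A B -> congr_mx (q * r) A B.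
Proof. by move=> qr AB AB' i j; rewrite PoszM Gauss_dvdz ?AB ?AB' // coprimezE. Qed.

Section ElementaryGeneration.

Variable P : 'M[int]_2 -> Prop.
Hypothesis P_upmx : forall j, P (upmx j).
Hypothesis P_lowmx : forall j, P (lowmx j).
Hypothesis PM : forall A B, P A -> P B -> P (A *m B).

Let P1 : P 1%:M.
Proof. by rewrite -upmx0. Qed.

Let P_rot : P (mx2 0 (-1) 1 0).
Proof.
have -> : mx2 0 (-1) 1 0 = upmx (-1) *m lowmx 1 *m upmx (-1).
  by rewrite !mx2_mul; congr mx2; ring.
by apply: PM; [apply: PM|].
Qed.

Lemma mx2_triangular N a b c d : (`|c| <= N)%N ->
  exists E u b' v, [/\ P E, \det E = 1 & mx2 a b c d = E *m mx2 u b' 0 v].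
Proof.
elim: N a b c d => [|N IHN] a b c d le_cN; have [-> | c_neq0] := eqVneq c 0;
  try by exists 1%:M, a, b, d; rewrite det1 mul1mx.
  by move: le_cN; rewrite leqn0 absz_eq0 (negPf c_neq0).
have lt_r_c : (`|- (a %% c)%Z| < `|c|)%N.
  by rewrite abszN -ltz_nat gez0_abs ?modz_ge0 // abszE ltz_mod.
have [E [u [b' [v [PE detE defA']]]]] :=
  IHN c d (- (a %% c)%Z) ((a %/ c)%Z * d - b) (leq_trans lt_r_c le_cN).
exists (upmx (a %/ c)%Z *m mx2 0 (-1) 1 0 *m E), u, b', v; split.
- by apply: PM => //; apply: PM.
- by rewrite !det_mulmx det_upmx detE det_mx2; ring.
rewrite -mulmxA -defA' {1}(divz_eq a c) !mx2_mul; congr mx2; ring.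
Qed.

Lemma SL2_mod_ind m : (forall A B, congr_mx m A B -> P A -> P B) ->
  forall A, (m %| \det A - 1)%Z -> P A.
Proof.
move=> P_congr A; rewrite [A]mx2E.
have [E [u [b [v [PE detE ->]]]]] :=
  @mx2_triangular _ (A 0 0) (A 0 1) (A 1 0) (A 1 1) (leqnn _).
rewrite det_mulmx detE mul1r det_mx2 mulr0 subr0 => uv1; apply: PM PE _.
apply: (P_congr (upmx u *m lowmx (- v) *m upmx u *m mx2 0 (-1) 1 0 *m upmx (v * b))).
  have uv1M K : (m %| (u * v - 1) * K)%Z by apply: dvdz_mulr.
  rewrite /upmx /lowmx !mx2_mul; apply: congr_mx2.
  - by rewrite (_ : _ - _ = (u * v - 1) * (- u)) //; ring.
  - by rewrite (_ : _ - _ = (u * v - 1) * (1 - b * (u * v - 1))) //; ring.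
  - by rewrite (_ : _ - _ = (u * v - 1) * (- 1)) //; ring.
  - by rewrite (_ : _ - _ = (u * v - 1) * (- (v * b))) //; ring.
by repeat apply: PM.
Qed.

End ElementaryGeneration.

Lemma crt_multiple (w q r : nat) (s : int) : (0 < q)%N -> coprime (w * r) q ->
  exists k : nat, (r %| k)%N /\ (q %| (w * k)%N%:Z - s)%Z.
Proof.
move=> q_gt0 wrq.
have /coprimezP[[u v] /= Bezout] : coprimez (w * r)%N q by rewrite coprimezE.
pose t := ((u * s) %% q)%Z; have t_ge0 : 0 <= t by rewrite modz_ge0 // eqz_nat -lt0n.
exists (r * `|t|)%N; split; first exact: dvdn_mulr.
have -> : (w * (r * `|t|))%N%:Z - s = (w * r)%N%:Z * (t - u * s) - s * v * q%:Z.
  by rewrite -[s in LHS]mul1r -Bezout !PoszM gez0_abs //; ring.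
apply: rpredB; last exact/dvdz_mull/dvdzz.
apply/dvdz_mull/dvdzP; exists (- ((u * s) %/ q)%Z).
by rewrite [in X in _ - X](divz_eq (u * s) q); ring.
Qed.

Definition congr_compat (E : int -> 'M[int]_2) :=
  forall (m : nat) a b, (m %| a - b)%Z -> congr_mx m (E a) (E b).

Lemma congr_compat_upmx : congr_compat upmx.
Proof. exact: congr_upmx. Qed.

Lemma congr_compat_lowmx : congr_compat lowmx.
Proof. exact: congr_lowmx. Qed.

Lemma congr_compat_conj E P Q : congr_compat E -> congr_compat (fun j => P *m E j *m Q).
Proof.
move=> E_compat m a b ab.
by apply: congr_mxM; [apply: congr_mxM; [exact: congr_mx_refl | exact: E_compat] |
  exact: congr_mx_refl].
Qed.

Section Reached.

Variable Gamma : 'M[int]_2 -> Prop.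
Hypothesis Gamma1 : Gamma 1%:M.
Hypothesis GammaM : forall A B, Gamma A -> Gamma B -> Gamma (A *m B).

Definition reached m B := exists2 A, Gamma A & congr_mx m A B.

Lemma reached_congr m A B : congr_mx m A B -> reached m A -> reached m B.
Proof. by move=> AB [A' GA' A'A]; exists A' => //; apply: congr_mx_trans AB. Qed.

Lemma reachedM m A B : reached m A -> reached m B -> reached m (A *m B).
Proof. by move=> [A' ? ?] [B' ? ?]; exists (A' *m B'); [apply: GammaM | apply: congr_mxM]. Qed.

Lemma reached_of_generator m E : (0 < m)%N -> congr_compat E -> E 0 = 1%:M ->
  {morph E : a b / a + b >-> a *m b} -> reached m (E 1) -> forall j, reached m (E j).
Proof.
move=> m_gt0 E_compat E0 ED E1 j.
have E_nat k : reached m (E k%:Z).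
  elim: k => [|k IHk]; first by rewrite E0; exists 1%:M; last exact: congr_mx_refl.
  by rewrite intS ED; apply: reachedM.
apply: reached_congr (E_nat `|(j %% m)%Z|%N); apply: E_compat.
have m_neq0 : m%:Z != 0 by rewrite eqz_nat -lt0n.
rewrite gez0_abs ?modz_ge0 //; apply/dvdzP; exists (- (j %/ m)%Z).
by rewrite [in X in _ - X](divz_eq j m); ring.
Qed.

Lemma reached_SL2 m : (0 < m)%N -> reached m (upmx 1) -> reached m (lowmx 1) ->
  forall A, (m %| \det A - 1)%Z -> reached m A.
Proof.
move=> m_gt0 U1 L1; apply: SL2_mod_ind; [| |exact: reachedM|exact: reached_congr].
- exact: reached_of_generator congr_compat_upmx upmx0 upmxD U1.
- exact: reached_of_generator congr_compat_lowmx lowmx0 lowmxD L1.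
Qed.

Lemma totally_non_congruence_reached :
  (forall m, (1 < m)%N -> reached m (upmx 1) /\ reached m (lowmx 1)) ->
  totally_non_congruence Gamma.
Proof.
move=> reached_gens; split; first by exists 1%:M.
move=> m m_gt1 B detB; have [A <- detA] := red_mx_lift m_gt1 detB.
have [U1 L1] := reached_gens m m_gt1.
have [A' GA' A'A] := reached_SL2 (ltnW m_gt1) U1 L1 detA.
by exists A'; split; last exact: red_mx_congr.
Qed.

Definition reached2 q r X Y := exists2 A, Gamma A & congr_mx q A X /\ congr_mx r A Y.

Lemma reached2M q r X Y X' Y' :
  reached2 q r X Y -> reached2 q r X' Y' -> reached2 q r (X *m X') (Y *m Y').
Proof.
move=> [A GA [AX AY]] [A' GA' [AX' AY']]; exists (A *m A'); first exact: GammaM.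
by split; apply: congr_mxM.
Qed.

Lemma reached2C q r X Y : reached2 q r X Y -> reached2 r q Y X.
Proof. by move=> [A GA [AX AY]]; exists A. Qed.

Lemma reached_crt q r X : coprime q r -> reached2 q r X X -> reached (q * r) X.
Proof. by move=> qr [A GA [AXq AXr]]; exists A => //; apply: congr_mx_crt. Qed.

Lemma reached2_of_multiples E (w q r : nat) s : (0 < q)%N -> coprime (w * r) q ->
  congr_compat E -> E 0 = 1%:M -> (forall k, Gamma (E (w * k)%N)) ->
  reached2 q r (E s) 1%:M.
Proof.
move=> q_gt0 wrq E_compat E0 GE; have [k [r_k q_wk]] := crt_multiple s q_gt0 wrq.
exists (E (w * k)%N) => //; split; first exact: E_compat.
by rewrite -E0; apply: E_compat; rewrite subr0 dvdzE dvdn_mull.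
Qed.

Lemma reached_pi_split (e m : nat) X : (0 < e)%N -> (0 < m)%N ->
  (forall q r : nat, (0 < q)%N -> (0 < r)%N -> coprime q r -> coprime e r ->
     (forall f, (0 < f)%N -> coprime e f -> coprime f q) -> reached2 q r X X) ->
  reached m X.
Proof.
move=> e_gt0 m_gt0 split_e; rewrite -(partnC \pi(e) m_gt0).
apply: reached_crt (coprime_partC _ _ _) (split_e _ _ (part_gt0 _ _) (part_gt0 _ _) _ _ _).
- exact: coprime_partC.
- exact: pnat_coprime (pnat_pi e_gt0) (part_pnat _ _).
- by move=> f f_gt0 ef; apply: p'nat_coprime (part_pnat _ _); rewrite -coprime_pi'.
Qed.

Section Families.

Variables a b c d : nat.
Hypotheses (a_gt0 : (0 < a)%N) (b_gt0 : (0 < b)%N) (c_gt0 : (0 < c)%N) (d_gt0 : (0 < d)%N).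
Hypotheses (coprime_ab : coprime a b) (coprime_ac : coprime a c) (coprime_bd : coprime b d).
Hypothesis Gamma_upmx : forall k, Gamma (upmx (a * k)%N).
Hypothesis Gamma_lowmx : forall k, Gamma (lowmx (b * k)%N).
Hypothesis Gamma_lowmx_conjT : forall k, Gamma (upmx 1 *m lowmx (c * k)%N *m upmx (-1)).
Hypothesis Gamma_lowmx_conjTV : forall k, Gamma (upmx (-1) *m lowmx (d * k)%N *m upmx 1).

Lemma reached_upmx1 m : (0 < m)%N -> reached m (upmx 1).
Proof.
move=> m_gt0; apply: (reached_pi_split a_gt0 m_gt0) => q r q_gt0 r_gt0 qr ar coprime_q.
have T_r : reached2 q r 1%:M (upmx 1).
  apply: reached2C; apply: (reached2_of_multiples (w := a)) => //.
  - by rewrite coprimeMl ar qr.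
  - exact: congr_compat_upmx.
  - exact: upmx0.
have L_q s : reached2 q r (lowmx s) 1%:M.
  apply: (reached2_of_multiples (w := b)) => //.
  - by rewrite coprimeMl coprime_q // coprime_sym.
  - exact: congr_compat_lowmx.
  - exact: lowmx0.
have LT_q : reached2 q r (upmx 1 *m lowmx (-1) *m upmx (-1)) 1%:M.
  apply: (reached2_of_multiples (E := fun j => upmx 1 *m lowmx j *m upmx (-1)) (w := c)) => //.
  - by rewrite coprimeMl coprime_q // coprime_sym.
  - exact/congr_compat_conj/congr_compat_lowmx.
  - by rewrite lowmx0 mulmx1 -upmxD addrN upmx0.
have := reached2M (reached2M (reached2M T_r (L_q (-1))) LT_q) (L_q 1).
rewrite mul1mx !mulmx1 (_ : _ *m _ *m lowmx 1 = upmx 1) //.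
by rewrite !mx2_mul; congr mx2; ring.
Qed.

Lemma reached_lowmx1 m : (0 < m)%N -> reached m (lowmx 1).
Proof.
move=> m_gt0; apply: (reached_pi_split b_gt0 m_gt0) => q r q_gt0 r_gt0 qr br coprime_q.
have L_r : reached2 q r 1%:M (lowmx 1).
  apply: reached2C; apply: (reached2_of_multiples (w := b)) => //.
  - by rewrite coprimeMl br qr.
  - exact: congr_compat_lowmx.
  - exact: lowmx0.
have U_q s : reached2 q r (upmx s) 1%:M.
  apply: (reached2_of_multiples (w := a)) => //.
  - by rewrite coprimeMl coprime_q 1?coprime_sym.
  - exact: congr_compat_upmx.
  - exact: upmx0.
have UL_q : reached2 q r (upmx (-1) *m lowmx 1 *m upmx 1) 1%:M.
  apply: (reached2_of_multiples (E := fun j => upmx (-1) *m lowmx j *m upmx 1) (w := d)) => //.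
  - by rewrite coprimeMl coprime_q // coprime_sym.
  - exact/congr_compat_conj/congr_compat_lowmx.
  - by rewrite lowmx0 mulmx1 -upmxD addNr upmx0.
have := reached2M (reached2M (reached2M L_r (U_q 1)) UL_q) (U_q (-1)).
rewrite mul1mx !mulmx1 (_ : _ *m _ *m upmx (-1) = lowmx 1) //.
by rewrite !mx2_mul; congr mx2; ring.
Qed.

Lemma totally_non_congruence_families : totally_non_congruence Gamma.
Proof.
apply: totally_non_congruence_reached => m m_gt1.
by split; [apply: reached_upmx1 | apply: reached_lowmx1]; apply: ltnW.
Qed.

End Families.

End Reached.


Lemma totally_non_congruenceS (Gamma Gamma' : 'M[int]_2 -> Prop) :
  (forall A, Gamma A -> Gamma' A) ->
  totally_non_congruence Gamma -> totally_non_congruence Gamma'.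
Proof.
move=> sub [[A GA] surj]; split; first by exists A; apply: sub.
move=> m m_gt1 B detB; have [A' [GA' <-]] := surj m m_gt1 B detB.
by exists A'; split => //; apply: sub.
Qed.

Local Close Scope ring_scope.

Theorem mainTheorem3 (n : nat) :
  prime n -> (5 <= n)%N ->
  regular_origami ('Alt_('I_n))%G (cycle3 n) (cyclen n) /\
  totally_non_congruence (veech_group ('Alt_('I_n))%G (cycle3 n) (cyclen n)).
Proof.
move=> n_prime n_ge5; have n_gt2 : 2 < n by lia.
split; first exact: Alt_generated.
have coprime_n k : 0 < k < n -> coprime n k.
  by case/andP=> k_gt0 lt_k_n; rewrite prime_coprime // gtnNdvd.
apply: (totally_non_congruenceS (@veech_group_stab _ _ _ _)).
apply: (@totally_non_congruence_families _ (stab_mx1 _ _) (@stab_mxM _ _ _) 3 n n (n - 2)).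
- by [].
- exact: prime_gt0.
- exact: prime_gt0.
- by rewrite subn_gt0; lia.
- by rewrite coprime_sym coprime_n //; lia.
- by rewrite coprime_sym coprime_n //; lia.
- by rewrite coprime_n //; lia.
- by move=> k; apply/stab_mx_upmx/cycle3_expg3.
- by move=> k; apply/stab_mx_lowmx/cyclen_expgn.
- by move=> k; apply/stab_mx_lowmx_conjT/cyclen_cycle3_expgn.
- by move=> k; apply/stab_mx_lowmx_conjTV/cyclen_cycle3V_expg.
Qed.
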